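(* Let $\mathcal{M}=(S,P,E,s_{init},L)$ be a CTMC with absorbing goal state $g$, let $\varepsilon,\delta\geq0$, $q=\max_{p\in S}E(p)$, $t\geq0$, and $s,s'\in S$ with $s\sim_{\varepsilon,\delta}s'$. (1) If $\delta=0$ then $|\mathrm{Pr}_s(\lozenge^{\leq t}g)-\mathrm{Pr}_{s'}(\lozenge^{\leq t}g)|\leq1-e^{-qt\varepsilon}$. (2) If $\varepsilon=0$ then $|\mathrm{Pr}_s(\lozenge^{\leq t}g)-\mathrm{Pr}_{s'}(\lozenge^{\leq t}g)|\leq1-e^{-qt(e^{\delta}-1)}$. (3) If $\varepsilon=\delta=0$ then $\mathrm{Pr}_s(\lozenge^{\leq t}g)=\mathrm{Pr}_{s'}(\lozenge^{\leq t}g)$.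
   Context: A CTMC $(S,P,E,s_{init},L)$: finite $S$, $P\colon S\to\mathrm{Distr}(S)$ ($P(s,A)=\sum_{a\in A}P(s,a)$), $E\colon S\to\mathbb{R}_{>0}$, initial state, labeling $L$; residence time in $s$ is exponential with rate $E(s)$, then a jump to $s'$ with probability $P(s,s')$. $\mathrm{Pr}_s(\lozenge^{\leq t}g)$: probability of reaching $g$ from $s$ within time $t$. For $R\subseteq S\times S$, $R(A)=\{t'\mid\exists a\in A:(a,t')\in R\}$. A reflexive symmetric $R$ is an $(\varepsilon,\delta)$-bisimulation if for all $(s,s')\in R$: $L(s)=L(s')$, $|\ln E(s)-\ln E(s')|\leq\delta$, and $P(s,A)\leq P(s',R(A))+\varepsilon$ for all $A\subseteq S$; $s\sim_{\varepsilon,\delta}s'$ if some such relation contains $(s,s')$. Standing assumption: $g$ is the unique goal state, absorbing and uniquely labeled, and all states from which $g$ is unreachable are collapsed into one absorbing uniquely labeled fail state. *)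

From HB Require Import structures.
From mathcomp Require Import all_boot all_order all_algebra.
From mathcomp Require Import all_classical all_reals all_analysis.
Set Implicit Arguments. Unset Strict Implicit. Unset Printing Implicit Defensive.
Import Order.TTheory GRing.Theory Num.Theory.
Import numFieldNormedType.Exports.
Local Open Scope classical_set_scope.
Local Open Scope ring_scope.

Record ctmc (R : realType) (S : finType) (Lab : eqType) := CTMC {
  P : S -> S -> R;
  E : S -> R;
  s_init : S;
  L : S -> Lab;
  P_ge0 : forall s s', 0 <= P s s';
  P_sum1 : forall s, \sum_(s' : S) P s s' = 1;
  E_gt0 : forall s, 0 < E s }.

Section CTMCdefs.
Variables (R : realType) (S : finType) (Lab : eqType) (M : ctmc R S Lab).

Definition Pset (s : S) (A : {set S}) : R := \sum_(a in A) P M s a.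

Definition rel_image (Rel : rel S) (A : {set S}) : {set S} :=
  [set t' | [exists a in A, Rel a t']].

Definition is_bisim (eps delta : R) (Rel : rel S) : Prop :=
  reflexive Rel /\ symmetric Rel /\
  forall s s', Rel s s' ->
    [/\ L M s = L M s',
        `| ln (E M s) - ln (E M s') | <= delta
      & forall A : {set S}, Pset s A <= Pset s' (rel_image Rel A) + eps].

Definition bisimilar (eps delta : R) (s s' : S) : Prop :=
  exists Rel : rel S, is_bisim eps delta Rel /\ Rel s s'.

Definition edge : rel S := fun a b => 0 < P M a b.

Definition qmax : R := \big[Num.max/0]_(p : S) E M p.

(* Probability of reaching g from s within time t using at most n jumps:
   the standard Volterra-type recursion over the first residence time
   (density E(s) e^{-E(s) x}) followed by a jump according to P. *)
Fixpoint reach_n (g : S) (n : nat) (s : S) (t : R) : R :=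
  match n with
  | O => if s == g then 1 else 0
  | n'.+1 =>
      if s == g then 1 else
      \int[@lebesgue_measure R]_(x in `[0, t])
        (E M s * expR (- (E M s * x)) *
           \sum_(s' : S) P M s s' * reach_n g n' s' (t - x))
  end.

(* Pr_s(<>^{<= t} g): the supremum (= limit, the sequence is nondecreasing)
   over the number of jumps. *)
Definition Pr_reach (g s : S) (t : R) : R :=
  sup [set reach_n g n s t | n in [set: nat]].

(* Standing assumption: g is the unique goal state, absorbing and uniquely
   labelled, and all states from which g is unreachable are collapsed into
   one absorbing uniquely labelled fail state. *)
Definition standing_assumption (g : S) : Prop :=
  [/\ P M g g = 1,
      (forall s, L M s = L M g -> s = g),
      (forall f1 f2, ~~ connect edge f1 g -> ~~ connect edge f2 g -> f1 = f2)
    & (forall f, ~~ connect edge f g ->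
         P M f f = 1 /\ forall s, L M s = L M f -> s = f)].

End CTMCdefs.

(* Let p_n(s, t) be the probability of reaching g from s within time t using
   at most n jumps.  Conditioning on the first residence time,
   p_(n+1)(s, t) = int_0^t E(s) e^(-E(s) x) sum_u P(s, u) p_n(u, t - x) dx,
   and one shows by induction on n that p_n(s, t) - p_n(s', t) <= h(t) for all
   related s, s', with h(t) = 1 - e^(-q eps t) when delta = 0 and
   h(t) = 1 - e^(-q (e^delta - 1) t) when eps = 0; the bound passes to the
   supremum over n.  The averaging over successors is a discrete coupling
   estimate: if mu(A) <= nu(R(A)) + eps for every A and f(u) - f(u') <= d
   whenever u R u', then mu f - nu f <= d + eps (1 - d), proved by peeling
   off the level sets of f.  What remains is an explicit computation with
   exponential densities, where the rates satisfy E(s) = E(s') in the first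
   case and |E(s) - E(s')| <= q (e^delta - 1) in the second. *)

From HB Require Import structures.
From mathcomp Require Import all_boot all_order all_algebra.
From mathcomp Require Import all_classical all_reals all_analysis.
From mathcomp Require Import ring lra.
Set Implicit Arguments. Unset Strict Implicit. Unset Printing Implicit Defensive.
Import Order.TTheory GRing.Theory Num.Theory.
Import numFieldNormedType.Exports.
Local Open Scope ring_scope.

Lemma min_add_max0_subr {R : realDomainType} (x m : R) :
  Num.min x m + Num.max 0 (x - m) = x.
Proof. by rewrite minEle maxEle; do 2 case: leP => ?; lra. Qed.

Lemma sum_split_min_max0 {R : realDomainType} {I : finType} (w f : I -> R) (m : R) :
  \sum_i w i * f i =
  \sum_i w i * Num.min (f i) m + \sum_i w i * Num.max 0 (f i - m).
Proof.
by rewrite -big_split; apply: eq_bigr => i _ /=; rewrite -mulrDr min_add_max0_subr.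
Qed.

Section EpsLifting.
Variables (R : realDomainType) (S : finType) (Rel : rel S).
Variables (mu nu : S -> R) (eps : R).
Hypotheses (mu_ge0 : forall u, 0 <= mu u) (nu_ge0 : forall u, 0 <= nu u).
Hypothesis eps_ge0 : 0 <= eps.
Hypothesis lifting : forall A : {set S},
  \sum_(u in A) mu u <= \sum_(u in rel_image Rel A) nu u + eps.

Lemma sum_min_le_lifting (a b : S -> R) (m : R) : 0 < m ->
  (forall u, 0 <= a u) -> (forall u, 0 < a u -> m <= a u) ->
  (forall u, 0 <= b u) -> (forall u u', Rel u u' -> a u <= b u') ->
  \sum_u mu u * Num.min (a u) m <= \sum_u nu u * Num.min (b u) m + eps * m.
Proof.
move=> m_gt0 a_ge0 a_ge_m b_ge0 ab.
set A := [set u | 0 < a u].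
have -> : \sum_u mu u * Num.min (a u) m = m * \sum_(u in A) mu u.
  rewrite mulr_sumr [RHS]big_mkcond /=; apply: eq_bigr => u _.
  rewrite inE; case: ltP => [au_gt0 | au_le0]; first by rewrite min_r ?a_ge_m // mulrC.
  have -> : a u = 0 by apply/eqP; rewrite eq_le au_le0 a_ge0.
  by rewrite min_l ?(ltW m_gt0) // mulr0.
have image_ge : m * \sum_(u in rel_image Rel A) nu u <= \sum_u nu u * Num.min (b u) m.
  rewrite mulr_sumr [leRHS](bigID (mem (rel_image Rel A))) /= -[leLHS]addr0.
  apply: lerD; last by apply: sumr_ge0 => u _; rewrite mulr_ge0 // le_min b_ge0 ltW.
  apply: ler_sum => u'; rewrite inE => /existsP[u /andP[uA Ruu']].
  rewrite inE in uA; rewrite min_r 1?mulrC //.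
  exact: le_trans (a_ge_m u uA) (ab u u' Ruu').
apply: le_trans (ler_wpM2l (ltW m_gt0) (lifting A)) _.
by rewrite mulrDr [m * eps]mulrC lerD2r.
Qed.

(* Induction on the support of [a]: the level [min a m] at its least positive
   value [m] is bounded by [sum_min_le_lifting], and [(a - m)^+] has a smaller
   support. *)
Lemma sum_le_lifting (a b : S -> R) (c : R) : 0 <= c ->
  (forall u, 0 <= a u <= c) -> (forall u, 0 <= b u) ->
  (forall u u', Rel u u' -> a u <= b u') ->
  \sum_u mu u * a u <= \sum_u nu u * b u + eps * c.
Proof.
have [n] := ubnP #|[set u | 0 < a u]|.
elim: n => // n IH in a b c *; rewrite ltnS => supp_a c_ge0 a_bnd b_ge0 ab.
case: (pickP (fun u => 0 < a u)) => [u1 au1_gt0 | a_le0].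
- have [u0 m_gt0 a_ge_m] := @arg_minP _ _ _ u1 (fun u => 0 < a u) a au1_gt0.
  set m := a u0 in m_gt0 a_ge_m *.
  have /andP[_ m_le_c] := a_bnd u0.
  have level_le : \sum_u mu u * Num.min (a u) m <=
                  \sum_u nu u * Num.min (b u) m + eps * m.
    by apply: sum_min_le_lifting => // u; have /andP[] := a_bnd u.
  have rest_le : \sum_u mu u * Num.max 0 (a u - m) <=
                 \sum_u nu u * Num.max 0 (b u - m) + eps * (c - m).
    apply: IH => [| | u | u | u u' Ruu'].
    - apply: leq_trans supp_a; apply: proper_card; apply/properP; split.
        apply/fintype.subsetP => u; rewrite !inE lt_max ltxx subr_gt0.
        exact: lt_trans.
      by exists u0; rewrite !inE // lt_max ltxx subrr ltxx.
    - by rewrite subr_ge0.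
    - have /andP[_ ac] := a_bnd u.
      by rewrite le_max lexx /= ge_max subr_ge0 m_le_c lerD2r ac.
    - by rewrite le_max lexx.
    - by rewrite ge_max le_max lexx le_max lerD2r ab // orbT.
  rewrite (sum_split_min_max0 mu a m) (sum_split_min_max0 nu b m); lra.
- rewrite big1 => [|u _].
    by rewrite addr_ge0 ?mulr_ge0 ?sumr_ge0 // => u _; rewrite mulr_ge0.
  have /andP[au_ge0 _] := a_bnd u; rewrite (_ : a u = 0) ?mulr0 //.
  by apply/eqP; rewrite eq_le au_ge0 leNgt a_le0.
Qed.

Lemma sum_sub_le_lifting (f : S -> R) (d : R) :
  \sum_u mu u <= 1 -> 0 <= d <= 1 -> (forall u, 0 <= f u <= 1) ->
  (forall u u', Rel u u' -> f u - f u' <= d) ->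
  \sum_u mu u * f u - \sum_u nu u * f u <= d + eps * (1 - d).
Proof.
move=> mu_le1 /andP[d_ge0 d_le1] f01 f_lip.
have lifted : \sum_u mu u * Num.max 0 (f u - d) <=
              \sum_u nu u * Num.min (f u) (1 - d) + eps * (1 - d).
  apply: sum_le_lifting => [| u | u | u u' Ruu'].
  - by rewrite subr_ge0.
  - have /andP[_ fu_le1] := f01 u.
    by rewrite le_max lexx /= ge_max subr_ge0 d_le1 lerD2r fu_le1.
  - by have /andP[fu_ge0 _] := f01 u; rewrite le_min fu_ge0 subr_ge0.
  - have /andP[_ fu_le1] := f01 u; have /andP[fu'_ge0 _] := f01 u'.
    rewrite ge_max !le_min subr_ge0 d_le1 fu'_ge0 lerD2r fu_le1 andbT /=.
    by rewrite lerBlDl addrC -lerBlDl f_lip.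
have low : \sum_u mu u * Num.min (f u) d <= d.
  apply: le_trans (_ : \sum_u mu u * d <= d).
    by apply: ler_sum => u _; apply: ler_wpM2l => //; rewrite ge_min lexx orbT.
  by rewrite -mulr_suml -[leRHS]mul1r ler_wpM2r.
have high : \sum_u nu u * Num.min (f u) (1 - d) <= \sum_u nu u * f u.
  by apply: ler_sum => u _; apply: ler_wpM2l => //; rewrite ge_min lexx.
rewrite (sum_split_min_max0 mu f d); lra.
Qed.

End EpsLifting.

Local Open Scope classical_set_scope.
Local Open Scope ring_scope.

Lemma sup_range_sub_le {R : realType} (a b : nat -> R) (c : R) :
  (forall n, a n - b n <= c) -> has_ubound (range b) ->
  sup (range a) - sup (range b) <= c.
Proof.
move=> ab_le_c b_ub; rewrite lerBlDr; apply: ge_sup; first by exists (a 0%N), 0%N.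
move=> _ [n _ <-]; apply: (@le_trans _ _ (b n + c)); first by rewrite -lerBlDl.
by rewrite addrC lerD2l; apply: ub_le_sup => //; exists n.
Qed.

Section Exponentials.
Context {R : realType}.
Notation mu := (@lebesgue_measure R).

Lemma expRN_mul_le1 (c y : R) : 0 <= c -> 0 <= y -> expR (- (c * y)) <= 1.
Proof. by move=> c_ge0 y_ge0; rewrite expR_le1 oppr_le0 mulr_ge0. Qed.

Lemma is_derive_expR_mul (c x : R) :
  is_derive x 1 (fun y => expR (c * y)) (expR (c * x) * c).
Proof.
have -> : (fun y => expR (c * y)) = expR \o (fun y => c * y) by [].
by apply: is_derive1_comp; apply: is_derive_eq; rewrite /GRing.scale /= mulr1.
Qed.

Lemma continuous_expR_mul (c : R) : continuous (fun x => expR (c * x)).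
Proof.
move=> x; apply/differentiable_continuous/derivable1_diffP.
by have [] := is_derive_expR_mul c x.
Qed.

Lemma integrable_expR_mul (c t : R) :
  mu.-integrable `[0, t] (EFin \o (fun x => expR (c * x))).
Proof.
apply: continuous_compact_integrable; first exact: segment_compact.
exact/continuous_subspaceT/continuous_expR_mul.
Qed.

Lemma Rintegral_expR_mul (c t : R) : 0 <= t ->
  c * \int[mu]_(x in `[0, t]) expR (c * x) = expR (c * t) - 1.
Proof.
rewrite le_eqVlt => /predU1P[<-|t_gt0].
  by rewrite set_itv1 Rintegral_set1 !mulr0 expR0 subrr.
rewrite -RintegralZl //; last exact: integrable_expR_mul.
rewrite /Rintegral (@continuous_FTC2 _ _ (fun y => expR (c * y))) //=.
- by rewrite mulr0 expR0.
- apply: continuous_subspaceT => x.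
  apply: (@continuousM R R (fun=> c) (fun y => expR (c * y)) x).
    exact: cst_continuous.
  exact: continuous_expR_mul.
- split.
  + by move=> x _; have [] := is_derive_expR_mul c x.
  + exact/cvg_at_right_filter/continuous_expR_mul.
  + exact/cvg_at_left_filter/continuous_expR_mul.
- by move=> x _; rewrite derive1E (is_derive_expR_mul c x).(derive_val) mulrC.
Qed.

Lemma expR_convE (l a t x : R) :
  expR (- (l * x)) * expR (- (a * (t - x))) = expR (- (a * t)) * expR ((a - l) * x).
Proof. by rewrite -!expRD; congr expR; ring. Qed.

Lemma integrable_exp_density (l t : R) :
  mu.-integrable `[0, t] (EFin \o (fun x => l * expR (- (l * x)))).
Proof.
apply: eq_integrable (integrableZl _ l (integrable_expR_mul (- l) t)) => // x _.
by rewrite /= mulNr.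
Qed.

Lemma integrable_expR_conv (l a t : R) :
  mu.-integrable `[0, t]
    (EFin \o (fun x => expR (- (l * x)) * expR (- (a * (t - x))))).
Proof.
apply: eq_integrable (integrableZl _ _ (integrable_expR_mul (a - l) t)) => // x _.
by rewrite /= expR_convE.
Qed.

Lemma Rintegral_exp_density (l t : R) : 0 <= t ->
  \int[mu]_(x in `[0, t]) (l * expR (- (l * x))) = 1 - expR (- (l * t)).
Proof.
move=> t_ge0.
have -> : (fun x => l * expR (- (l * x))) = (fun x => l * expR (- l * x)).
  by apply/funext => x; rewrite mulNr.
rewrite RintegralZl //; last exact: integrable_expR_mul.
have := Rintegral_expR_mul (- l) t_ge0; rewrite !mulNr; lra.
Qed.

Lemma Rintegral_expR_conv (l a t : R) : 0 <= t ->
  (l - a) * \int[mu]_(x in `[0, t]) (expR (- (l * x)) * expR (- (a * (t - x)))) =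
  expR (- (a * t)) - expR (- (l * t)).
Proof.
move=> t_ge0.
have -> : (fun x => expR (- (l * x)) * expR (- (a * (t - x)))) =
          (fun x => expR (- (a * t)) * expR ((a - l) * x)).
  by apply/funext => x; exact: expR_convE.
rewrite RintegralZl //; last exact: integrable_expR_mul.
have -> : expR (- (l * t)) = expR (- (a * t)) * expR ((a - l) * t).
  by rewrite -expRD; congr expR; ring.
by rewrite mulrCA -opprB mulNr Rintegral_expR_mul //; ring.
Qed.

Lemma integrable_jump_defect (l k a t : R) :
  mu.-integrable `[0, t] (EFin \o (fun x =>
    l * expR (- (l * x)) - k * (expR (- (l * x)) * expR (- (a * (t - x)))))).
Proof.
have kconv : mu.-integrable `[0, t]
    (EFin \o (fun x => k * (expR (- (l * x)) * expR (- (a * (t - x)))))).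
  exact: eq_integrable (integrableZl _ k (integrable_expR_conv l a t)).
exact: eq_integrable (integrableB _ (integrable_exp_density l t) kconv).
Qed.

Lemma Rintegral_jump_defect_le (l k a t : R) : l - k <= a -> 0 <= t ->
  \int[mu]_(x in `[0, t])
     (l * expR (- (l * x)) - k * (expR (- (l * x)) * expR (- (a * (t - x))))) <=
  1 - expR (- (a * t)).
Proof.
move=> lka t_ge0.
have lak : l - a <= k by rewrite lerBlDl addrC -lerBlDl.
rewrite RintegralB //; last 2 first.
- exact: integrable_exp_density.
- exact: eq_integrable (integrableZl _ k (integrable_expR_conv l a t)).
rewrite Rintegral_exp_density // RintegralZl //; last exact: integrable_expR_conv.
have conv := Rintegral_expR_conv l a t_ge0.
have conv_ge0 : 0 <= \int[mu]_(x in `[0, t]) (expR (- (l * x)) * expR (- (a * (t - x)))).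
  by apply: Rintegral_ge0 => x _; rewrite mulr_ge0 ?expR_ge0.
have := ler_wpM2r conv_ge0 lak.
move: conv conv_ge0; set J := \int[mu]_(x in _) _; clearbody J; lra.
Qed.

Lemma dist_le_ln_dist (l m q delta : R) :
  0 < l -> 0 < m -> l <= q -> m <= q -> `|ln l - ln m| <= delta ->
  `|l - m| <= q * (expR delta - 1).
Proof.
wlog ml : l m / m <= l => [hwlog | l_gt0 m_gt0 lq mq ln_dist].
  have [ml | /ltW lm] := leP m l; first exact: hwlog.
  by move=> *; rewrite distrC hwlog // distrC.
have delta_ge0 := le_trans (normr_ge0 _) ln_dist.
move/(le_trans (ler_norm _)): ln_dist.
rewrite lerBlDl -ler_expR expRD !lnK ?posrE // => l_le.
have : m * (expR delta - 1) <= q * (expR delta - 1).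
  by rewrite ler_wpM2r // subr_ge0 -expR0 ler_expR.
rewrite ger0_norm ?subr_ge0 //; lra.
Qed.

Lemma jump_density_sub_le_slower (l m b x y g1 g2 : R) :
  0 <= m <= l -> 0 <= x -> g1 <= 1 -> 0 <= g2 ->
  g1 - g2 <= 1 - expR (- (b * y)) ->
  l * expR (- (l * x)) * g1 - m * expR (- (m * x)) * g2 <=
  l * expR (- (l * x)) - m * (expR (- (l * x)) * expR (- (b * y))).
Proof.
move=> /andP[m_ge0 ml] x_ge0 g1_le1 g2_ge0 g12.
have el_le_em : expR (- (l * x)) <= expR (- (m * x)).
  by rewrite ler_expR lerN2 ler_wpM2r.
have el_ge0 := expR_ge0 (- (l * x)).
(* three nonnegative products adding up to the difference of both sides *)
have : 0 <= m * g2 * (expR (- (m * x)) - expR (- (l * x))).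
  by rewrite !mulr_ge0 ?subr_ge0.
have : 0 <= expR (- (l * x)) * (l - m) * (1 - g1) by rewrite !mulr_ge0 ?subr_ge0.
have : 0 <= expR (- (l * x)) * m * ((1 - expR (- (b * y))) - (g1 - g2)).
  by rewrite !mulr_ge0 ?subr_ge0.
lra.
Qed.

Lemma jump_density_sub_le_faster (l m b x t g1 g2 : R) :
  0 <= l <= m -> m - l <= b -> 0 <= x -> g1 <= 1 -> 0 <= g2 ->
  g1 - g2 <= 1 - expR (- (b * (t - x))) ->
  l * expR (- (l * x)) * g1 - m * expR (- (m * x)) * g2 <=
  (1 - expR (- (b * t))) * (l * expR (- (l * x))).
Proof.
move=> /andP[l_ge0 lm] mlb x_ge0 g1_le1 g2_ge0 g12.
have em_le_el : expR (- (m * x)) <= expR (- (l * x)).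
  by rewrite ler_expR lerN2 ler_wpM2r.
have shift : expR (- (l * x)) * expR (- (b * t)) <=
             expR (- (m * x)) * expR (- (b * (t - x))).
  rewrite -!expRD ler_expR -subr_ge0.
  have -> : - (m * x) + - (b * (t - x)) - (- (l * x) + - (b * t)) = (b - (m - l)) * x.
    by ring.
  by rewrite mulr_ge0 ?subr_ge0.
have em_ge0 := expR_ge0 (- (m * x)).
(* four nonnegative products adding up to the difference of both sides *)
have : 0 <= (m - l) * expR (- (m * x)) * g2 by rewrite !mulr_ge0 ?subr_ge0.
have : 0 <= l * expR (- (m * x)) * ((1 - expR (- (b * (t - x)))) - (g1 - g2)).
  by rewrite !mulr_ge0 ?subr_ge0.
have : 0 <= l * (expR (- (l * x)) - expR (- (m * x))) * (1 - g1).
  by rewrite !mulr_ge0 ?subr_ge0.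
have : 0 <= l * (expR (- (m * x)) * expR (- (b * (t - x))) -
                 expR (- (l * x)) * expR (- (b * t))).
  by rewrite mulr_ge0 ?subr_ge0.
lra.
Qed.

End Exponentials.

Section FirstJump.
Context {R : realType}.
Notation mu := (@lebesgue_measure R).

Definition nondecreasing01 (G : R -> R) : Prop :=
  {homo G : x y / x <= y} /\ forall y, 0 <= G y <= 1.

Definition first_jump (l : R) (G : R -> R) (t : R) : R :=
  \int[mu]_(x in `[0, t]) (l * expR (- (l * x)) * G (t - x)).

Section Bounds.
Variables (l : R) (G : R -> R).
Hypotheses (l_ge0 : 0 <= l) (G_nd01 : nondecreasing01 G).

Let G_nd := G_nd01.1.
Let G01 := G_nd01.2.

Lemma first_jump_integrand_ge0 t x : 0 <= l * expR (- (l * x)) * G (t - x).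
Proof. by have /andP[G_ge0 _] := G01 (t - x); rewrite !mulr_ge0 ?expR_ge0. Qed.

Lemma first_jump_integrand_le t x : 0 <= x ->
  l * expR (- (l * x)) * G (t - x) <= l * expR (- (l * x)).
Proof.
move=> x_ge0; have /andP[_ G_le1] := G01 (t - x).
by rewrite ler_piMr ?mulr_ge0 ?expR_ge0.
Qed.

Lemma integrable_first_jump t :
  mu.-integrable `[0, t] (EFin \o (fun x => l * expR (- (l * x)) * G (t - x))).
Proof.
apply: measurable_bounded_integrable => //.
- have := @lebesgue_measure_itv R `[0, t]; rewrite /= => ->.
  by case: ifP => _; rewrite ?ltry.
- apply: measurable_realfun.nonincreasing_measurable => // x y xy.
  apply: ler_pM; rewrite ?mulr_ge0 ?expR_ge0 //; first by have /andP[] := G01 (t - y).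
    by rewrite ler_wpM2l // ler_expR lerN2 ler_wpM2l.
  by apply: G_nd; rewrite lerD2l lerN2.
- exists l; split; first by rewrite num_real.
  move=> M l_lt_M x /=; rewrite in_itv /= => /andP[x_ge0 _].
  rewrite ger0_norm ?first_jump_integrand_ge0 //.
  rewrite (le_trans (first_jump_integrand_le t x_ge0)) //.
  by rewrite (le_trans _ (ltW l_lt_M)) // ler_piMr // expR_le1 oppr_le0 mulr_ge0.
Qed.

Lemma first_jump_ge0 t : 0 <= first_jump l G t.
Proof. by apply: Rintegral_ge0 => x _; exact: first_jump_integrand_ge0. Qed.

Lemma first_jump_le t : 0 <= t -> first_jump l G t <= 1 - expR (- (l * t)).
Proof.
move=> t_ge0; rewrite -Rintegral_exp_density //.
apply: le_Rintegral => //.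
- exact: integrable_first_jump.
- exact: integrable_exp_density.
by move=> x; rewrite /= in_itv /= => /andP[x_ge0 _]; exact: first_jump_integrand_le.
Qed.

Lemma nondecreasing01_first_jump : nondecreasing01 (first_jump l G).
Proof.
split=> [t1 t2 t12 | t]; last first.
  rewrite first_jump_ge0 /=; have [t_lt0 | t_ge0] := ltP t 0.
    by rewrite /first_jump set_itv_ge ?Rintegral_set0 // bnd_simp -ltNge.
  by rewrite (le_trans (first_jump_le t_ge0)) // lerBlDr lerDl expR_ge0.
have [t1_lt0 | t1_ge0] := ltP t1 0.
  by rewrite {1}/first_jump set_itv_ge ?Rintegral_set0 ?first_jump_ge0 // bnd_simp -ltNge.
apply: (@le_trans _ _ (\int[mu]_(x in `[0, t1]) (l * expR (- (l * x)) * G (t2 - x)))).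
  apply: le_Rintegral => //; first exact: integrable_first_jump.
    apply: integrableS (integrable_first_jump t2) => //.
    by apply: subset_itvl; rewrite bnd_simp.
  by move=> x _; rewrite ler_wpM2l ?mulr_ge0 ?expR_ge0 // G_nd // lerD2r.
rewrite -subr_ge0 (Rintegral_itvB (integrable_first_jump t2)) ?bnd_simp //.
by apply: Rintegral_ge0 => x _; exact: first_jump_integrand_ge0.
Qed.

End Bounds.

Lemma first_jump_sub_le (l m t : R) (G1 G2 T : R -> R) :
  0 <= l -> 0 <= m -> nondecreasing01 G1 -> nondecreasing01 G2 ->
  mu.-integrable `[0, t] (EFin \o T) ->
  (forall x, 0 <= x <= t ->
     l * expR (- (l * x)) * G1 (t - x) - m * expR (- (m * x)) * G2 (t - x) <= T x) ->
  first_jump l G1 t - first_jump m G2 t <= \int[mu]_(x in `[0, t]) T x.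
Proof.
move=> l_ge0 m_ge0 G1_nd01 G2_nd01 T_int le_T.
rewrite /first_jump -RintegralB //; try exact: integrable_first_jump.
apply: le_Rintegral => //.
exact: eq_integrable (integrableB _ (integrable_first_jump l_ge0 G1_nd01 t)
                                    (integrable_first_jump m_ge0 G2_nd01 t)).
Qed.


Lemma first_jump_sub_le_same_rate (l a c t : R) (G1 G2 : R -> R) :
  0 <= l -> (1 - c) * l <= a -> 0 <= t ->
  nondecreasing01 G1 -> nondecreasing01 G2 ->
  (forall y, 0 <= y -> G1 y - G2 y <= 1 - c * expR (- (a * y))) ->
  first_jump l G1 t - first_jump l G2 t <= 1 - expR (- (a * t)).
Proof.
move=> l_ge0 cla t_ge0 G1_nd01 G2_nd01 G12.
have lcla : l - c * l <= a by rewrite -[X in X - _]mul1r -mulrBl.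
apply: le_trans (Rintegral_jump_defect_le lcla t_ge0).
apply: first_jump_sub_le => //; first exact: integrable_jump_defect.
move=> x /andP[_ xt]; rewrite -mulrBr.
rewrite [leRHS](_ : _ = l * expR (- (l * x)) * (1 - c * expR (- (a * (t - x))))).
  by rewrite ler_wpM2l ?mulr_ge0 ?expR_ge0 ?G12 ?subr_ge0.
by ring.
Qed.

Lemma first_jump_sub_le_rates (l m b t : R) (G1 G2 : R -> R) :
  0 <= l -> 0 <= m -> `|l - m| <= b -> 0 <= t ->
  nondecreasing01 G1 -> nondecreasing01 G2 ->
  (forall y, 0 <= y -> G1 y - G2 y <= 1 - expR (- (b * y))) ->
  first_jump l G1 t - first_jump m G2 t <= 1 - expR (- (b * t)).
Proof.
move=> l_ge0 m_ge0 lm_b t_ge0 G1_nd01 G2_nd01 G12.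
have b_ge0 := le_trans (normr_ge0 _) lm_b.
move: lm_b; rewrite ler_norml => /andP[mlb lmb].
have {}mlb : m - l <= b by rewrite -opprB lerNl.
have G_bnd y : G1 y <= 1 /\ 0 <= G2 y.
  by have /andP[_ ->] := G1_nd01.2 y; have /andP[-> _] := G2_nd01.2 y.
have [ml | lm] := leP m l.
- apply: le_trans (Rintegral_jump_defect_le lmb t_ge0).
  apply: first_jump_sub_le => //; first exact: integrable_jump_defect.
  move=> x /andP[x_ge0 xt]; have [G1_le1 G2_ge0] := G_bnd (t - x).
  by apply: jump_density_sub_le_slower; rewrite ?m_ge0 ?G12 ?subr_ge0.
- pose T x := (1 - expR (- (b * t))) * (l * expR (- (l * x))).
  apply: (@le_trans _ _ (\int[mu]_(x in `[0, t]) T x)).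
    apply: first_jump_sub_le => //.
      exact: eq_integrable (integrableZl _ _ (integrable_exp_density l t)).
    move=> x /andP[x_ge0 xt]; have [G1_le1 G2_ge0] := G_bnd (t - x).
    by apply: jump_density_sub_le_faster; rewrite ?l_ge0 ?(ltW lm) ?G12 ?subr_ge0.
  rewrite /T RintegralZl //; last exact: integrable_exp_density.
  by rewrite Rintegral_exp_density // ler_piMr ?subr_ge0 ?expR_le1 ?oppr_le0
    ?mulr_ge0 // lerBlDr lerDl expR_ge0.
Qed.

End FirstJump.

Section Reachability.
Variables (R : realType) (S : finType) (Lab : eqType) (M : ctmc R S Lab) (g : S).

Definition succ_avg (F : S -> R -> R) (s : S) (y : R) : R := \sum_u P M s u * F u y.

Lemma reach_n_succ n s t : reach_n M g n.+1 s t =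
  if s == g then 1 else first_jump (E M s) (succ_avg (reach_n M g n) s) t.
Proof. by []. Qed.

Lemma E_ge0 s : 0 <= E M s. Proof. exact/ltW/E_gt0. Qed.

Lemma E_le_qmax s : E M s <= qmax M. Proof. exact: le_bigmax. Qed.

Lemma nondecreasing01_succ_avg F s :
  (forall u, nondecreasing01 (F u)) -> nondecreasing01 (succ_avg F s).
Proof.
move=> F_nd01; split=> [y1 y2 y12 | y].
  by apply: ler_sum => u _; rewrite ler_wpM2l ?P_ge0 ?(F_nd01 u).1.
apply/andP; split.
  apply: sumr_ge0 => u _; have /andP[Fu_ge0 _] := (F_nd01 u).2 y.
  by rewrite mulr_ge0 ?P_ge0.
rewrite -(P_sum1 M s); apply: ler_sum => u _.
by have /andP[_ Fu_le1] := (F_nd01 u).2 y; rewrite ler_piMr ?P_ge0.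
Qed.

Lemma nondecreasing01_reach_n n u : nondecreasing01 (reach_n M g n u).
Proof.
have nondecreasing01_cst (c : R) : 0 <= c <= 1 -> nondecreasing01 (fun=> c).
  by move=> c01; split.
elim: n u => [|n IH] u /=; case: (u == g);
  try by apply: nondecreasing01_cst; rewrite ?lexx ?ler01.
exact: nondecreasing01_first_jump (E_ge0 u) (nondecreasing01_succ_avg u IH).
Qed.

Lemma succ_avg_sub_le (Rel : rel S) (eps a y : R) (F : S -> R -> R) (s s' : S) :
  0 <= eps -> 0 <= a -> 0 <= y ->
  (forall A, Pset M s A <= Pset M s' (rel_image Rel A) + eps) ->
  (forall u, nondecreasing01 (F u)) ->
  (forall u u', Rel u u' -> F u y - F u' y <= 1 - expR (- (a * y))) ->
  succ_avg F s y - succ_avg F s' y <= 1 - (1 - eps) * expR (- (a * y)).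
Proof.
move=> eps_ge0 a_ge0 y_ge0 lift F_nd01 F_bnd.
have P_le1 : \sum_u P M s u <= 1 by rewrite P_sum1.
have F01 u : 0 <= F u y <= 1 by exact: (F_nd01 u).2.
set d := 1 - expR (- (a * y)) in F_bnd *.
have d01 : 0 <= d <= 1 by rewrite subr_ge0 expRN_mul_le1 // lerBlDr lerDl expR_ge0.
rewrite /succ_avg [leRHS](_ : _ = d + eps * (1 - d)); last by rewrite /d; ring.
exact: (sum_sub_le_lifting (P_ge0 M s) (P_ge0 M s') eps_ge0 lift
  (f := F^~ y) P_le1 d01 F01 F_bnd).
Qed.


Definition jump_preserves_bound (Rel : rel S) (h : R -> R) : Prop :=
  forall (F : S -> R -> R) s s' t, (forall u, nondecreasing01 (F u)) ->
    (forall u u' y, Rel u u' -> 0 <= y -> F u y - F u' y <= h y) ->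
    Rel s s' -> 0 <= t ->
    first_jump (E M s) (succ_avg F s) t - first_jump (E M s') (succ_avg F s') t <= h t.

Section BoundedDistance.
Variables (Rel : rel S) (h : R -> R).
Hypothesis Rel_goal : forall u u', Rel u u' -> (u == g) = (u' == g).
Hypothesis h_ge0 : forall y, 0 <= y -> 0 <= h y.
Hypothesis jump_h : jump_preserves_bound Rel h.

Lemma reach_n_sub_le n s s' t : Rel s s' -> 0 <= t ->
  reach_n M g n s t - reach_n M g n s' t <= h t.
Proof.
elim: n s s' t => [|n IH] s s' t Rss' t_ge0.
  by rewrite /= -(Rel_goal Rss'); case: ifP; rewrite subrr h_ge0.
rewrite !reach_n_succ -(Rel_goal Rss'); case: ifP => _; first by rewrite subrr h_ge0.
by apply: jump_h => // u; exact: nondecreasing01_reach_n.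
Qed.

Lemma Pr_reach_dist_le s s' t : symmetric Rel -> Rel s s' -> 0 <= t ->
  `|Pr_reach M g s t - Pr_reach M g s' t| <= h t.
Proof.
move=> Rel_sym Rss' t_ge0.
have reach_ub u : has_ubound (range (fun n => reach_n M g n u t)).
  by exists 1 => _ [n _ <-]; have /andP[] := (nondecreasing01_reach_n n u).2 t.
rewrite ler_norml lerNl opprB; apply/andP; split; apply: sup_range_sub_le => // n;
  apply: reach_n_sub_le => //; by rewrite Rel_sym.
Qed.

End BoundedDistance.


Section Bisimulation.
Variables (Rel : rel S) (eps delta : R).
Hypothesis bisimR : is_bisim M eps delta Rel.

Lemma bisim_goal : (forall u, L M u = L M g -> u = g) ->
  forall u u', Rel u u' -> (u == g) = (u' == g).
Proof.
move=> g_label u u' Ruu'; have [L_eq _ _] := bisimR.2.2 u u' Ruu'.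
apply/eqP/eqP => [u_g | u'_g]; apply: g_label; first by rewrite -L_eq u_g.
by rewrite L_eq u'_g.
Qed.

Lemma jump_preserves_bound_eps : delta = 0 -> 0 <= eps ->
  jump_preserves_bound Rel (fun y => 1 - expR (- (qmax M * eps * y))).
Proof.
move=> delta0 eps_ge0 F s s' t F_nd01 F_bnd Rss' t_ge0.
have [_ ln_dist lift] := bisimR.2.2 s s' Rss'.
have <- : E M s = E M s'.
  apply: ln_inj; rewrite ?posrE ?E_gt0 //.
  by apply/eqP; rewrite -subr_eq0 -normr_le0 -delta0.
apply: (@first_jump_sub_le_same_rate _ _ _ (1 - eps)) => //.
- exact: E_ge0.
- by rewrite subKr mulrC ler_wpM2r ?E_le_qmax.
- exact: nondecreasing01_succ_avg.
- exact: nondecreasing01_succ_avg.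
move=> y y_ge0; apply: succ_avg_sub_le => // [|u u' Ruu'].
  by rewrite mulr_ge0 // (le_trans (E_ge0 s) (E_le_qmax s)).
exact: F_bnd.
Qed.

Lemma jump_preserves_bound_delta : eps = 0 ->
  jump_preserves_bound Rel (fun y => 1 - expR (- (qmax M * (expR delta - 1) * y))).
Proof.
move=> eps0 F s s' t F_nd01 F_bnd Rss' t_ge0.
have [_ ln_dist lift] := bisimR.2.2 s s' Rss'.
have rate_dist := dist_le_ln_dist (E_gt0 M s) (E_gt0 M s')
  (E_le_qmax s) (E_le_qmax s') ln_dist.
apply: (first_jump_sub_le_rates _ _ rate_dist t_ge0); rewrite ?E_ge0 //.
- exact: nondecreasing01_succ_avg.
- exact: nondecreasing01_succ_avg.
move=> y y_ge0; have := @succ_avg_sub_le Rel eps (qmax M * (expR delta - 1)) y F s s'.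
rewrite eps0 subr0 mul1r; apply=> //; first exact: le_trans (normr_ge0 _) rate_dist.
- by rewrite -eps0.
- by move=> u u' Ruu'; exact: F_bnd.
Qed.

End Bisimulation.

End Reachability.

Theorem corollary2 (R : realType) (S : finType) (Lab : eqType)
  (M : ctmc R S Lab) (g : S) (eps delta t : R) (s s' : S) :
  standing_assumption M g ->
  0 <= eps -> 0 <= delta -> 0 <= t ->
  bisimilar M eps delta s s' ->
  [/\ (delta = 0 ->
         `| Pr_reach M g s t - Pr_reach M g s' t |
           <= 1 - expR (- (qmax M * t * eps))),
      (eps = 0 ->
         `| Pr_reach M g s t - Pr_reach M g s' t |
           <= 1 - expR (- (qmax M * t * (expR delta - 1))))
    & (eps = 0 -> delta = 0 -> Pr_reach M g s t = Pr_reach M g s' t)].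
Proof.
move=> [_ g_label _ _] eps_ge0 delta_ge0 t_ge0 [Rel [bisimR Rss']].
have [_ [Rel_sym _]] := bisimR.
have Rel_goal := bisim_goal bisimR g_label.
have q_ge0 : 0 <= qmax M := le_trans (E_ge0 M s) (E_le_qmax M s).
have h_ge0 c : 0 <= c -> forall y, 0 <= y -> 0 <= 1 - expR (- (c * y)).
  by move=> c_ge0 y y_ge0; rewrite subr_ge0 expRN_mul_le1.
have eps_bound : delta = 0 ->
    `|Pr_reach M g s t - Pr_reach M g s' t| <= 1 - expR (- (qmax M * t * eps)).
  move=> delta0; rewrite mulrAC.
  have jump_h := jump_preserves_bound_eps bisimR delta0 eps_ge0.
  apply: (Pr_reach_dist_le Rel_goal _ jump_h) => //.
  exact/h_ge0/mulr_ge0.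
split=> // [eps0 | eps0 delta0].
- rewrite mulrAC.
  apply: (Pr_reach_dist_le Rel_goal _ (jump_preserves_bound_delta bisimR eps0)) => //.
  by apply/h_ge0/mulr_ge0; rewrite // subr_ge0 -expR0 ler_expR.
- apply/eqP; rewrite -subr_eq0 -normr_le0.
  by have := eps_bound delta0; rewrite eps0 mulr0 oppr0 expR0 subrr.
Qed.
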